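(* There exists a primary monoid $H$ in $\mathcal{C}_2$ having full system of sets of lengths, i.e. $\mathcal{L}(H) = \mathbb{P}_{\mathrm{fin}}$.
   Context: All monoids are commutative, cancellative, reduced, written additively. $\mathcal{C}_2$ is the collection of all rank-$2$ submonoids of free commutative monoids of finite rank, where the rank of $H$ is the rank of its Grothendieck group $\mathrm{gp}(H)$. For an atomic monoid $H$ and $x\in H$, $\mathsf{L}(x)$ is the set of all $n$ such that $x$ is a sum of $n$ atoms (with $\mathsf{L}(0)=\{0\}$); the system of sets of lengths is $\mathcal{L}(H)=\{\mathsf{L}(x) \mid x \in H\}$. $\mathbb{P}_{\mathrm{fin}} := \{\{0\},\{1\}\} \cup \{S \subset \mathbb{Z}_{\ge 2} \mid S \text{ finite}\}$ (the empty set included). A submonoid $S$ of $H$ is divisor-closed if $s\in S$, $x\in H$ and $x$ divides $s$ in $H$ (i.e. $s = x+z$ for some $z \in H$) imply $x\in S$; $H$ is primary if it is nontrivial and its only divisor-closed submonoids are $\{0\}$ and $H$. *)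

From mathcomp Require Import all_boot all_algebra.
Set Implicit Arguments. Unset Strict Implicit. Unset Printing Implicit Defensive.
Import GRing.Theory.

Definition vec (n : nat) := {ffun 'I_n -> nat}.
Definition vzero (n : nat) : vec n := [ffun => 0%N].
Definition vadd (n : nat) (x y : vec n) : vec n := [ffun i => (x i + y i)%N].

Definition submonoid (n : nat) (H : vec n -> Prop) : Prop :=
  H (vzero n) /\ (forall x y, H x -> H y -> H (vadd x y)).

Definition is_atom (n : nat) (H : vec n -> Prop) (u : vec n) : Prop :=
  H u /\ u <> vzero n /\
  (forall a b, H a -> H b -> u = vadd a b -> a = vzero n \/ b = vzero n).

Definition vsum (n : nat) (s : seq (vec n)) : vec n := foldr (@vadd n) (vzero n) s.

(* L(x): set of lengths of x (as a predicate on nat); L(0) = {0} via the empty sum. *)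
Definition lengths (n : nat) (H : vec n -> Prop) (x : vec n) : nat -> Prop :=
  fun k => exists s : seq (vec n),
    size s = k /\ (forall u, u \in s -> is_atom H u) /\ vsum s = x.

Definition in_Pfin (L : nat -> Prop) : Prop :=
  (forall k, L k <-> k = 0%N) \/ (forall k, L k <-> k = 1%N) \/
  (exists s : seq nat, s != [::] /\ all (fun k => 2 <= k)%N s /\ (forall k, L k <-> k \in s)).

Definition full_system (n : nat) (H : vec n -> Prop) : Prop :=
  (forall x, H x -> in_Pfin (lengths H x)) /\
  (forall L, in_Pfin L -> exists x, H x /\ (forall k, lengths H x k <-> L k)).

Definition in_gp (n : nat) (H : vec n -> Prop) (w : 'I_n -> int) : Prop :=
  exists a b, H a /\ H b /\ (forall i, w i = ((a i)%:Z - (b i)%:Z)%R).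

Definition Z_indep (n k : nat) (v : 'I_k -> 'I_n -> int) : Prop :=
  forall c : 'I_k -> int,
    (forall j, (\sum_(i < k) c i * v i j)%R = 0%R) -> forall i, c i = 0%R.

Definition rank_ge (n : nat) (H : vec n -> Prop) (k : nat) : Prop :=
  exists v : 'I_k -> 'I_n -> int, (forall i, in_gp H (v i)) /\ Z_indep v.

(* rank of H = rank of gp(H) = maximal size of a Z-independent family in gp(H). *)
Definition has_rank (n : nat) (H : vec n -> Prop) (r : nat) : Prop :=
  rank_ge H r /\ ~ rank_ge H r.+1.

Definition divisor_closed_sub (n : nat) (H S : vec n -> Prop) : Prop :=
  (forall x, S x -> H x) /\ submonoid S /\
  (forall s x z, S s -> H x -> H z -> s = vadd x z -> S x).

Definition primary (n : nat) (H : vec n -> Prop) : Prop :=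
  (exists x, H x /\ x <> vzero n) /\
  (forall S, divisor_closed_sub H S ->
     (forall x, S x <-> x = vzero n) \/ (forall x, S x <-> H x)).

From mathcomp Require Import all_boot all_algebra zify boolp.
Set Implicit Arguments. Unset Strict Implicit. Unset Printing Implicit Defensive.

(* Every submonoid of N^n is a BF-monoid (a sum of k atoms has weight at least k),
   so each of its sets of lengths lies in P_fin; the work is to realise every finite
   S of integers >= 2 as a set of lengths.  Take H in N^2 generated by all (a, b) with
   1 <= b <= a^2, which makes H primary of rank 2, together with one family of gadgets
   for each finite list S = S_i: with T = sum S, M = 2T + 2, K = T! and a scale N_i
   growing very fast with i,
     v_l = (1, K/(l-1) N_i)   and   w_l = (M - l + 1, (M + 1) K N_i)   for l in S,
   so that w_l + (l - 1) v_l = x_i := (M, (M + 2) K N_i).  (In the code: lens, height,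
   den, scale, short, long and target.)  N_i divides the second coordinate of x_i and
   of every level-i gadget, whereas the other generators fitting under x_i contribute
   less than N_i to it; so a factorization of x_i uses level-i gadgets only.  Exactly
   one w_l occurs (two of them exceed M), and the first coordinate then forces the
   length to be l: L(x_i) = S. *)

(** * Sets of lengths in submonoids of N^n *)

Section Vectors.
Variable n : nat.
Implicit Types (x y u : vec n) (r : seq (vec n)).

Lemma vaddE x y i : vadd x y i = x i + y i.
Proof. by rewrite ffunE. Qed.

Lemma vzeroE i : vzero n i = 0.
Proof. by rewrite ffunE. Qed.

Lemma vadd0 x : vadd x (vzero n) = x.
Proof. by apply/ffunP => i; rewrite vaddE vzeroE addn0. Qed.

Lemma vsum_cons u r : vsum (u :: r) = vadd u (vsum r).
Proof. by []. Qed.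

Lemma vsumE r i : vsum r i = \sum_(u <- r) u i.
Proof.
elim: r => [|u r IHr]; first by rewrite big_nil vzeroE.
by rewrite vsum_cons vaddE big_cons IHr.
Qed.

Lemma vsum_cat r1 r2 : vsum (r1 ++ r2) = vadd (vsum r1) (vsum r2).
Proof. by apply/ffunP => i; rewrite vaddE !vsumE big_cat. Qed.

Lemma vsum_nseq k u i : vsum (nseq k u) i = k * u i.
Proof. by rewrite vsumE big_nseq iter_addn_0 mulnC. Qed.

Lemma leq_vsum r u i : u \in r -> u i <= vsum r i.
Proof. by move=> ur; rewrite vsumE (big_rem u) //= leq_addr. Qed.

Lemma size_le_vsum r i : (forall u, u \in r -> 0 < u i) -> size r <= vsum r i.
Proof.
by move=> r_pos; rewrite vsumE -sum1_size big_seq [leqRHS]big_seq leq_sum.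
Qed.

Definition weight x := \sum_i x i.

Lemma weightD x y : weight (vadd x y) = weight x + weight y.
Proof. by rewrite -big_split; apply: eq_bigr => i _; rewrite vaddE. Qed.

Lemma weight_gt0 x : x <> vzero n -> 0 < weight x.
Proof.
move=> x_neq0; rewrite lt0n sum_nat_eq0; apply: contra_notN x_neq0 => /forallP x0.
by apply/ffunP => i; rewrite vzeroE; apply/eqP/x0.
Qed.

Lemma weight0 : weight (vzero n) = 0.
Proof. by apply: big1 => i _; rewrite vzeroE. Qed.

Lemma weight_vsum r : weight (vsum r) = \sum_(u <- r) weight u.
Proof.
elim: r => [|u r IHr]; first by rewrite weight0 big_nil.
by rewrite big_cons vsum_cons weightD IHr.
Qed.

End Vectors.

Section Lengths.
Variables (n : nat) (H : vec n -> Prop).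
Implicit Types (x : vec n) (r : seq (vec n)).

Lemma lengths0 x : lengths H x 0 <-> x = vzero n.
Proof. by split=> [[[|u s] [//= _ [_ <-]]] | ->] //; exists [::]. Qed.

Lemma lengths1 x : lengths H x 1 <-> is_atom H x.
Proof.
split=> [[[|u [|v s]] [//= _ [atoms <-]]] | ax].
  by rewrite vadd0; apply: atoms; rewrite mem_head.
exists [:: x]; split=> //; split; last by rewrite vsum_cons vadd0.
by move=> u /[!inE] /eqP ->.
Qed.

Lemma lengthsD x y k l : lengths H x k -> lengths H y l -> lengths H (vadd x y) (k + l).
Proof.
move=> [s [<- [s_atoms <-]]] [t [<- [t_atoms <-]]].
exists (s ++ t); split; first by rewrite size_cat.
by split=> [u /[!mem_cat] /orP [/s_atoms | /t_atoms] |] //; rewrite vsum_cat.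
Qed.

Lemma lengths_le_weight x k : lengths H x k -> k <= weight x.
Proof.
move=> [s [<- [atoms <-]]]; rewrite weight_vsum -sum1_size big_seq [leqRHS]big_seq.
by apply: leq_sum => u /atoms [_ [u0 _]]; apply: weight_gt0.
Qed.

Lemma lengths_vzero k : lengths H (vzero n) k <-> k = 0.
Proof.
by split=> [/lengths_le_weight | ->]; [rewrite weight0; case: k | apply/lengths0].
Qed.

Lemma lengths_exists x : H x -> exists k, lengths H x k.
Proof.
have [w] := ubnP (weight x); elim: w x => // w IHw x lt_xw Hx.
have [->|x0] := pselect (x = vzero n); first by exists 0; apply/lengths0.
have [[a [b [Ha Hb xE a0 b0]]] | nosplit] :=
  pselect (exists a b, [/\ H a, H b, x = vadd a b, a <> vzero n & b <> vzero n]).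
  have wx : weight x = weight a + weight b by rewrite xE weightD.
  have [|k ak] := IHw a _ Ha; first by have := weight_gt0 b0; lia.
  have [|l bl] := IHw b _ Hb; first by have := weight_gt0 a0; lia.
  by exists (k + l); rewrite xE; apply: lengthsD.
exists 1; apply/lengths1; split=> //; split=> // a b Ha Hb xE.
by apply: contrapT => /not_orP [a0 b0]; apply: nosplit; exists a, b.
Qed.

Hypothesis subH : submonoid H.

Lemma submonoid_vsum r : (forall u, u \in r -> H u) -> H (vsum r).
Proof.
case: subH => H0 HD; elim: r => [//|u r IHr] Hr; rewrite vsum_cons.
apply: HD; first by apply: Hr; rewrite mem_head.
by apply: IHr => v vr; apply: Hr; rewrite inE vr orbT.
Qed.

Lemma lengths_mem x k : lengths H x k -> H x.
Proof. by move=> [s [_ [atoms <-]]]; apply: submonoid_vsum => u /atoms []. Qed.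

Lemma lengths_atom x : is_atom H x -> forall k, lengths H x k <-> k = 1.
Proof.
move=> ax k; split=> [|->]; last exact/lengths1.
have [_ [x0 x_indec]] := ax.
move=> [[|u s] [<- [atoms xE]]]; first by case: x0; rewrite -xE.
have s_lengths : lengths H (vsum s) (size s).
  by exists s; split=> //; split=> // v vs; apply: atoms; rewrite inE vs orbT.
have [Hu [u0 _]] := atoms u (mem_head _ _).
have [//|s0] := x_indec u (vsum s) Hu (lengths_mem s_lengths) (esym xE).
by have := lengths_le_weight s_lengths; rewrite s0 weight0 /=; case: (size s).
Qed.

Lemma lengths_in_Pfin x : H x -> in_Pfin (lengths H x).
Proof.
move=> Hx; have [->|x0] := pselect (x = vzero n); first by left; apply: lengths_vzero.
have [xa|xna] := pselect (is_atom H x); first by right; left; apply: lengths_atom.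
have ge2 k : lengths H x k -> 2 <= k.
  by case: k => [/lengths0 // | [/lengths1 // | k]].
pose s := [seq k <- iota 2 (weight x) | `[< lengths H x k >]].
have memsE k : lengths H x k <-> k \in s.
  rewrite mem_filter mem_iota; split=> [xk | /andP [/asboolP //]].
  by rewrite asboolT //= ge2 //=; have := lengths_le_weight xk; have := ge2 _ xk; lia.
right; right; exists s; split; last split => //.
  by have [k /memsE] := lengths_exists Hx; case: s {memsE}.
by apply/allP => k /memsE /ge2.
Qed.

End Lengths.

(** * Generated monoids, primary monoids and rank *)

Lemma atom_of_coord1 n (H : vec n -> Prop) (c : 'I_n) x :
    (forall y, H y -> y <> vzero n -> 0 < y c) -> H x -> x c = 1 -> is_atom H x.
Proof.
move=> H_gt0 Hx x1; split=> //; split=> [x0 | a b Ha Hb xE].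
  by move: x1; rewrite x0 vzeroE.
have : a c + b c = 1 by rewrite -vaddE -xE.
have [a0|/(H_gt0 a Ha) a_gt0] := pselect (a = vzero n); first by left.
have [b0|/(H_gt0 b Hb) b_gt0] := pselect (b = vzero n); first by right.
lia.
Qed.

Definition gen_monoid n (G : vec n -> Prop) (x : vec n) : Prop :=
  exists2 r : seq (vec n), (forall g, g \in r -> G g) & vsum r = x.

Section GeneratedMonoid.
Variables (n : nat) (G : vec n -> Prop).
Local Notation M := (gen_monoid G).

Lemma gen_monoid_submonoid : submonoid M.
Proof.
split; first by exists [::].
move=> _ _ [r Gr <-] [s Gs <-]; exists (r ++ s); last exact: vsum_cat.
by move=> g /[!mem_cat] /orP [/Gr | /Gs].
Qed.

Lemma mem_gen_monoid g : G g -> M g.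
Proof. by exists [:: g] => [u /[!inE] /eqP -> | ]; rewrite ?vsum_cons ?vadd0. Qed.

Lemma gen_monoid_split a b : M a -> M b -> a <> vzero n -> b <> vzero n ->
  exists r : seq (vec n), [/\ forall g, g \in r -> G g, vsum r = vadd a b & 1 < size r].
Proof.
move=> [[|u r] Gr <-] [[|v s] Gs <-] // _ _.
exists ((u :: r) ++ v :: s); split; last by rewrite size_cat /= addnS.
  by move=> g /[!mem_cat] /orP [/Gr | /Gs].
exact: vsum_cat.
Qed.

Lemma atom_is_generator u : (forall g, G g -> g <> vzero n) -> is_atom M u -> G u.
Proof.
move=> G_neq0 [[[|g r] Gr uE] [u0 u_indec]]; first by case: u0; rewrite -uE.
have Gg : G g by apply: Gr; rewrite mem_head.
have Mr : M (vsum r) by exists r => // h hr; apply: Gr; rewrite inE hr orbT.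
have [g0|r0] := u_indec g (vsum r) (mem_gen_monoid Gg) Mr (esym uE).
  by case: (G_neq0 g Gg).
by rewrite -uE vsum_cons r0 vadd0.
Qed.

Lemma gen_monoid_gt0 c x :
  (forall g, G g -> 0 < g c) -> M x -> x <> vzero n -> 0 < x c.
Proof.
move=> G_gt0 [[|g r] Gr <-] // _; rewrite vsum_cons vaddE ltn_addr //.
by apply: G_gt0; apply: Gr; rewrite mem_head.
Qed.

End GeneratedMonoid.

Lemma primary_of_multiples n (H : vec n -> Prop) :
    (exists x, H x /\ x <> vzero n) ->
    (forall s x, H s -> s <> vzero n -> H x ->
       exists k z, H z /\ vsum (nseq k s) = vadd x z) ->
  primary H.
Proof.
move=> nontriv multiples; split=> // S [SH [subS Sdiv]].
have [[s [Ss s0]] | triv] := pselect (exists s, S s /\ s <> vzero n); last first.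
  left=> x; split=> [Sx | ->]; last by case: subS.
  by apply: contrapT => x0; apply: triv; exists x.
right=> x; split=> [/SH // | Hx].
have [k [z [Hz skE]]] := multiples s x (SH s Ss) s0 Hx.
apply: (Sdiv _ x z _ Hx Hz skE); apply: submonoid_vsum => // u.
by rewrite mem_nseq => /andP [_ /eqP ->].
Qed.

Section Rank.
Import GRing.Theory.
Local Open Scope ring_scope.

Lemma Z_indep_le_dim (n k : nat) (v : 'I_k -> 'I_n -> int) : Z_indep v -> (k <= n)%N.
Proof.
move=> indep; rewrite leqNgt; apply/negP => lt_nk.
pose A : 'M[rat]_(k, n) := \matrix_(i, j) (v i j)%:~R.
have /rowV0Pn [u /sub_kermxP uA0 /rV0Pn [j uj_neq0]] : kermx A != 0.
  rewrite kermx_eq0 /row_free; apply: contraL lt_nk => /eqP <-.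
  by rewrite -leqNgt rank_leq_col.
(* clear the denominators of a nonzero rational relation u between the rows *)
pose d := \prod_(l < k) denq (u 0 l).
pose c i := numq (u 0 i) * \prod_(l < k | l != i) denq (u 0 l).
have cE i : (c i)%:~R = u 0 i * d%:~R :> rat.
  by rewrite /d (bigD1 i) //= /c !intrM numqE mulrA.
have : c j != 0.
  by rewrite mulf_neq0 ?numq_eq0 //; apply/prodf_neq0 => l _; rewrite denq_neq0.
apply/negP/negPn/eqP; apply: indep => m; apply: (@intr_inj rat).
rewrite rmorph_sum /=; under eq_bigr do rewrite intrM cE mulrAC.
have := congr1 (fun B : 'rV_n => B 0 m) uA0; rewrite !mxE /= => uAm.
rewrite -mulr_suml (eq_bigr (fun i => u 0 i * A i m)) ?uAm ?mul0r // => i _.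
by rewrite mxE.
Qed.

Lemma in_gp_mem n (H : vec n -> Prop) (a : vec n) :
  submonoid H -> H a -> in_gp H (fun j => (a j)%:Z).
Proof.
by case=> H0 _ Ha; exists a, (vzero n); do 2!split=> //; move=> j; rewrite vzeroE subr0.
Qed.

End Rank.

Lemma has_rank_full n (H : vec n -> Prop) : rank_ge H n -> has_rank H n.
Proof. by split=> // -[v [_ /Z_indep_le_dim]]; rewrite ltnn. Qed.

(** * The monoid and its gadgets *)

Notation c0 := (ord0 : 'I_2).
Notation c1 := (lift ord0 ord0 : 'I_2).

Lemma ord2_cases (j : 'I_2) : j = c0 \/ j = c1.
Proof. by case: j => -[|[|//]] lt_j2; [left | right]; apply: val_inj. Qed.

Definition mk2 (a b : nat) : vec 2 := [ffun i : 'I_2 => if val i == 0 then a else b].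

Lemma mk2E0 a b : mk2 a b c0 = a. Proof. by rewrite ffunE. Qed.
Lemma mk2E1 a b : mk2 a b c1 = b. Proof. by rewrite ffunE. Qed.

Lemma vec2P (x y : vec 2) : x c0 = y c0 -> x c1 = y c1 -> x = y.
Proof. by move=> e0 e1; apply/ffunP => j; case: (ord2_cases j) => ->. Qed.

Lemma leq_sumn_mem l s : l \in s -> l <= sumn s.
Proof. by elim: s => //= a s IHs /[!inE] /orP [/eqP -> | /IHs]; lia. Qed.

Definition lens (i : nat) : seq nat := odflt [::] (@unpickle (seq nat) i).
Definition lens_sum i := sumn (lens i).
Definition height i := 2 * lens_sum i + 2.
Definition den i := (lens_sum i)`!.
Definition cap i := (height i + 2) * den i.
(* shift i exceeds cap j * scale j for all j < i, and scale i exceeds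
   (height i + shift i) * height i: this is what separates the levels. *)
Fixpoint shift i :=
  if i is j.+1 then shift j + cap j * (height j * (height j + shift j) + 1) else 0.
Definition scale i := height i * (height i + shift i) + 1.

Lemma scale_gt0 i : 0 < scale i.
Proof. by rewrite /scale addn1. Qed.

Definition short i l := mk2 1 (den i %/ (l - 1) * scale i).
Definition long i l := mk2 (height i - l + 1) ((height i + 1) * den i * scale i).
Definition target i := mk2 (height i) (cap i * scale i).

Definition gadget i (g : vec 2) : bool :=
  has (fun l => (1 < l) && ((g == short i l) || (g == long i l))) (lens i).
Definition base (g : vec 2) : bool := [&& 0 < g c0, 0 < g c1 & g c1 <= g c0 ^ 2].
Definition generator (g : vec 2) : Prop := base g \/ exists i, gadget i g.

Definition Hfull : vec 2 -> Prop := gen_monoid generator.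

Lemma shiftS i : shift i.+1 = shift i + cap i * scale i.
Proof. by []. Qed.

Lemma shift_lt_scale i : shift i < scale i.
Proof. by rewrite /scale /height; nia. Qed.

Lemma shift_mono : {homo shift : i j / i <= j}.
Proof.
by apply: homo_leq => [//|? ? ?|i]; [exact: leq_trans | rewrite shiftS leq_addr].
Qed.

Lemma cap_scale_le_shift j i : j < i -> cap j * scale j <= shift i.
Proof. by move=> /shift_mono; apply: leq_trans; rewrite shiftS leq_addl. Qed.

Lemma cap_scale_lt_scale i j : i < j -> cap i * scale i < scale j.
Proof. by move=> /cap_scale_le_shift /leq_ltn_trans; apply; apply: shift_lt_scale. Qed.

Section Level.
Variable i : nat.

Lemma heightE : height i = 2 * lens_sum i + 2.
Proof. by []. Qed.

Lemma den_scale_gt0 : 0 < den i * scale i.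
Proof. by rewrite muln_gt0 fact_gt0 scale_gt0. Qed.

Lemma short_coef_bounds l : 1 < l <= lens_sum i ->
  den i %/ (l - 1) * (l - 1) = den i /\ 0 < den i %/ (l - 1) <= den i.
Proof.
move=> l_bounds; have dvd_l : l - 1 %| den i by apply: dvdn_fact; lia.
split; first exact: divnK.
rewrite leq_div andbT divn_gt0; last lia.
exact: dvdn_leq (fact_gt0 _) dvd_l.
Qed.

Lemma gadgetP g : gadget i g ->
  exists2 l, l \in lens i & [/\ 1 < l <= lens_sum i & g = short i l \/ g = long i l].
Proof.
move=> /hasP [l li /andP [l_gt1 gl]]; exists l; rewrite // l_gt1 leq_sumn_mem //.
by split=> //; case/orP: gl => /eqP; [left | right].
Qed.

Lemma short_gadget l : l \in lens i -> 1 < l -> gadget i (short i l).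
Proof. by move=> li l_gt1; apply/hasP; exists l; rewrite ?l_gt1 ?eqxx. Qed.

Lemma long_gadget l : l \in lens i -> 1 < l -> gadget i (long i l).
Proof. by move=> li l_gt1; apply/hasP; exists l; rewrite ?l_gt1 ?eqxx ?orbT. Qed.

Lemma gadget_bounds g : gadget i g ->
  [/\ 0 < g c0 <= height i, scale i <= g c1 <= cap i * scale i & scale i %| g c1].
Proof.
have := den_scale_gt0; rewrite muln_gt0 => /andP [den_gt0 scale_gt0].
have cap_ge : forall m, m <= height i + 2 -> m * den i * scale i <= cap i * scale i.
  by move=> m m_le; rewrite /cap leq_mul2r leq_mul2r m_le !orbT.
move=> /gadgetP [l _ [l_bounds [->|->]]]; rewrite mk2E0 mk2E1 dvdn_mull //.
  have [_ /andP [q_gt0 q_le]] := short_coef_bounds l_bounds.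
  rewrite leq_pmull //=; split=> //; first by rewrite heightE addn2.
  apply: leq_trans (cap_ge 1 _); last by rewrite addn2.
  by rewrite mul1n leq_mul2r q_le orbT.
rewrite cap_ge ?leq_add2l // leq_pmull ?muln_gt0 ?den_gt0 ?addn1 // andbT.
by split=> //; rewrite heightE; lia.
Qed.
End Level.

Lemma generator_gt0 g : generator g -> 0 < g c0 /\ 0 < g c1.
Proof.
case=> [/and3P [-> -> _] // | [j /gadget_bounds [/andP [-> _] /andP [scale_le _] _]]].
by split=> //; exact: leq_trans (scale_gt0 j) scale_le.
Qed.

Lemma generator_neq0 g : generator g -> g <> vzero 2.
Proof. by move=> /generator_gt0 [+ _] g0; rewrite g0 vzeroE. Qed.

Lemma Hfull_gt0 x : Hfull x -> x <> vzero 2 -> 0 < x c0 /\ 0 < x c1.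
Proof.
by move=> Hx x0; split; apply: gen_monoid_gt0 Hx x0 => g /generator_gt0 [].
Qed.

Lemma Hfull_submonoid : submonoid Hfull.
Proof. exact: gen_monoid_submonoid. Qed.

(** * Separation of levels *)

Section Separation.
Variable i : nat.

Lemma gadget_sum_cases r : all (gadget i) r -> vsum r c0 <= height i ->
    (vsum r c0 = size r /\ vsum r c1 <= size r * (den i * scale i))
  \/ exists2 l, l \in lens i &
       [/\ 1 < l, vsum r c0 = height i - l + size r
          & (height i + 1) * den i * scale i + (size r).-1 <= vsum r c1].
Proof.
have hE := heightE i; have DS_gt0 := den_scale_gt0 i.
elim: r => [|g r IHr]; first by move=> _ _; left; rewrite !vzeroE.
rewrite vsum_cons !vaddE => /andP [/gadgetP [l li [l_bounds gE]] r_gad].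
have r_size : size r <= vsum r c1.
  apply: size_le_vsum => u /(allP r_gad) /gadget_bounds [_ /andP [+ _] _].
  exact: leq_trans (scale_gt0 i).
have [_ /andP [q_gt0 q_le]] := short_coef_bounds l_bounds.
have q_pos : 0 < den i %/ (l - 1) * scale i by rewrite muln_gt0 q_gt0 scale_gt0.
case: gE => ->; rewrite mk2E0 mk2E1 [size _]/= => r0_le;
  have [|[r0 r1] | [l' l'i [l'_gt1 r0 r1]]] := IHr r_gad; try lia.
- left; split; first lia.
  by rewrite mulSn leq_add // leq_mul2r q_le orbT.
- by right; exists l' => //; split=> //; lia.
- by right; exists l => //; split=> //; lia.
(* two long gadgets already exceed height i in the first coordinate *)
- by have : l' <= lens_sum i := leq_sumn_mem l'i; lia.
Qed.

Lemma foreign_generator_small g : generator g -> ~~ gadget i g ->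
  g c0 <= height i -> g c1 <= cap i * scale i -> g c1 <= (height i + shift i) * g c0.
Proof.
case=> [/and3P [_ _ g1_sq] | [j gj]] ngi g0_le g1_le.
  by apply: leq_trans g1_sq _; rewrite -mulnn leq_mul2r (leq_trans g0_le) ?leq_addr ?orbT.
have [/andP [g0_gt0 _] /andP [scale_le g1_le'] _] := gadget_bounds gj.
case: (ltngtP j i) => [lt_ji | lt_ij | eq_ji].
- apply: leq_trans g1_le' _; apply: leq_trans (cap_scale_le_shift lt_ji) _.
  by apply: leq_trans (leq_addl (height i) _) _; apply: leq_pmulr.
- by have := cap_scale_lt_scale lt_ij; lia.
- by rewrite -eq_ji gj in ngi.
Qed.

Lemma level_separation r : (forall g, g \in r -> generator g) ->
    vsum r c0 <= height i -> scale i %| vsum r c1 -> vsum r c1 <= cap i * scale i ->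
  all (gadget i) r.
Proof.
move=> gens r0_le r1_dvd r1_le.
pose B := \sum_(g <- r | ~~ gadget i g) g c1.
have r1E : vsum r c1 = \sum_(g <- r | gadget i g) g c1 + B.
  by rewrite vsumE (bigID (gadget i)).
have B_dvd : scale i %| B.
  have A_dvd : scale i %| \sum_(g <- r | gadget i g) g c1.
    by apply: dvdn_sum => g /gadget_bounds [].
  by rewrite -(dvdn_addr _ A_dvd) -r1E.
(* B is the contribution of the other generators: a multiple of scale i below it. *)
have B_lt : B < scale i.
  apply: (@leq_ltn_trans ((height i + shift i) * vsum r c0)); last first.
    by rewrite /scale addn1 ltnS mulnC leq_mul2r r0_le orbT.
  rewrite vsumE (bigID (gadget i)) /= mulnDr; apply: leq_trans (leq_addl _ _).
  rewrite /B big_distrr /= big_seq_cond [leqRHS]big_seq_cond.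
  apply: leq_sum => g /andP [gr ngi].
  apply: foreign_generator_small ngi _ _; first exact: gens.
    exact: leq_trans (leq_vsum _ gr) r0_le.
  exact: leq_trans (leq_vsum _ gr) r1_le.
have /eqP : B = 0.
  by apply/eqP; apply: contraLR B_lt; rewrite -lt0n -leqNgt => /dvdn_leq; apply.
rewrite sum_nat_seq_eq0 => /allP B0; apply/allP => g gr; apply: contraT => ngi.
have [_ g1_gt0] := generator_gt0 (gens g gr).
by have := B0 g gr; rewrite ngi /= => /eqP g1_0; rewrite g1_0 in g1_gt0.
Qed.

Lemma short_atom l : l \in lens i -> 1 < l -> is_atom Hfull (short i l).
Proof.
move=> li l_gt1; apply: (@atom_of_coord1 _ _ c0) => [y Hy y0 | | ]; last exact: mk2E0.
  by have [] := Hfull_gt0 Hy y0.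
by apply: mem_gen_monoid; right; exists i; apply: short_gadget.
Qed.

Lemma long_atom l : l \in lens i -> 1 < l -> is_atom Hfull (long i l).
Proof.
move=> li l_gt1; have gl := long_gadget li l_gt1.
have [/andP [g0_gt0 g0_le] /andP [_ g1_le] g1_dvd] := gadget_bounds gl.
split; first by apply: mem_gen_monoid; right; exists i.
split=> [g0 | a b Ha Hb gE]; first by rewrite g0 vzeroE in g0_gt0.
apply: contrapT => /not_orP [a0 b0].
have [r [gens rE size_r]] := gen_monoid_split Ha Hb a0 b0; rewrite -gE in rE.
have gads : all (gadget i) r by apply: level_separation; rewrite ?rE.
have l_le : l <= lens_sum i := leq_sumn_mem li.
have DS_gt0 := den_scale_gt0 i; have hE := heightE i.
have r0_le : vsum r c0 <= height i by rewrite rE.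
have [[r0 r1] | [l' _ [_ r0 r1]]] := gadget_sum_cases gads r0_le;
  rewrite rE mk2E0 mk2E1 in r0 r1.
  have : size r * (den i * scale i) < (height i + 1) * den i * scale i.
    by rewrite -mulnA ltn_pmul2r //; lia.
  lia.
lia.
Qed.

Lemma long_add_shorts l : 1 < l <= lens_sum i ->
  vsum (long i l :: nseq (l - 1) (short i l)) = target i.
Proof.
move=> l_bounds; have [qE _] := short_coef_bounds l_bounds; have hE := heightE i.
apply: vec2P; rewrite vsum_cons vaddE vsum_nseq ?mk2E0 ?mk2E1; first lia.
by rewrite mulnA [(l - 1) * _]mulnC qE /cap; nia.
Qed.

Lemma lengths_target k : lengths Hfull (target i) k <-> k \in lens i /\ 1 < k.
Proof.
split=> [[q [<- [atoms qE]]] | [ki k_gt1]]; last first.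
  have k_le : k <= lens_sum i := leq_sumn_mem ki.
  exists (long i k :: nseq (k - 1) (short i k)); split; first by rewrite /= size_nseq; lia.
  split; last by apply: long_add_shorts; rewrite k_gt1.
  move=> u /[!inE] /orP [/eqP -> | /[!mem_nseq] /andP [_ /eqP ->]].
    exact: long_atom.
  exact: short_atom.
have gens : forall g, g \in q -> generator g.
  by move=> g /atoms; apply: atom_is_generator generator_neq0.
have gads : all (gadget i) q.
  by apply: level_separation; rewrite ?qE ?mk2E0 ?mk2E1 ?dvdn_mull.
have q0_le : vsum q c0 <= height i by rewrite qE mk2E0.
have hE := heightE i; have DS_gt0 := den_scale_gt0 i.
have [[q0 q1] | [l li [l_gt1 q0 _]]] := gadget_sum_cases gads q0_le.
  rewrite qE mk2E0 mk2E1 in q0 q1.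
  have : height i * (den i * scale i) < cap i * scale i.
    by rewrite /cap -mulnA ltn_pmul2r //; lia.
  lia.
rewrite qE mk2E0 in q0; have l_le : l <= lens_sum i := leq_sumn_mem li.
by have -> : size q = l by lia.
Qed.

End Separation.

Lemma base_mem a b : 0 < a -> 0 < b -> b <= a ^ 2 -> Hfull (mk2 a b).
Proof. by move=> *; apply: mem_gen_monoid; left; apply/and3P; rewrite mk2E0 mk2E1. Qed.

Lemma Hfull_full_system : full_system Hfull.
Proof.
split=> [x|L]; first exact: (lengths_in_Pfin Hfull_submonoid).
case=> [L0 | [L1 | [s [s_neq0 [s_ge2 L_s]]]]].
- exists (vzero 2); split; first by case: Hfull_submonoid.
  by move=> k; rewrite L0; apply: lengths_vzero.
- have one_atom : is_atom Hfull (mk2 1 1).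
    apply: (@atom_of_coord1 _ _ c0) => [y Hy y0 | | ]; last exact: mk2E0.
      by have [] := Hfull_gt0 Hy y0.
    exact: base_mem.
  exists (mk2 1 1); split; first by case: one_atom.
  by move=> k; rewrite L1; exact (lengths_atom Hfull_submonoid one_atom k).
have lensE : lens (pickle s) = s by rewrite /lens pickleK.
have targetE k : lengths Hfull (target (pickle s)) k <-> L k.
  rewrite lengths_target lensE L_s; split=> [[] // | ks]; split=> //.
  exact: (allP s_ge2).
exists (target (pickle s)); split=> //.
have s0 : nth 0 s 0 \in s by rewrite mem_nth // lt0n size_eq0.
by apply: (lengths_mem Hfull_submonoid (k := nth 0 s 0)); apply/targetE/L_s.
Qed.

Lemma Hfull_primary : primary Hfull.
Proof.
apply: primary_of_multiples.
  exists (mk2 1 1); split; first exact: base_mem.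
  by move=> one0; have := mk2E0 1 1; rewrite one0 vzeroE.
move=> s x Hs s0 _; have [s0_gt0 s1_gt0] := Hfull_gt0 Hs s0.
(* 2 * s c1 <= c gives 2c * s c1 <= c^2 <= (2c * s c0 - x c0)^2. *)
pose c := x c0 + x c1 + 2 * s c1 + 1.
have c_le : c <= 2 * c * s c0 - x c0 by nia.
exists (2 * c), (mk2 (2 * c * s c0 - x c0) (2 * c * s c1 - x c1)); split.
  apply: base_mem; [lia | nia |].
  apply: (@leq_trans (c * c)); last by rewrite -mulnn leq_mul.
  by apply: leq_trans (leq_subr _ _) _; rewrite mulnAC leq_mul2r; apply/orP; right; lia.
by apply: vec2P; rewrite vsum_nseq vaddE ?mk2E0 ?mk2E1; nia.
Qed.

Lemma Hfull_rank : has_rank Hfull 2.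
Proof.
apply: has_rank_full.
pose u (j : 'I_2) : vec 2 := if val j == 0 then mk2 1 1 else mk2 2 1.
exists (fun j k => Posz (u j k)); split.
  move=> j; apply: in_gp_mem Hfull_submonoid _.
  by rewrite /u; case: ifP => _; apply: base_mem.
move=> c cE; have := cE c0; have := cE c1; rewrite !big_ord_recl !big_ord0 /u /= !ffunE /=.
by move=> e1 e0 j; case: (ord2_cases j) => ->; lia.
Qed.

Theorem theorem4p6 :
  exists (n : nat) (H : vec n -> Prop),
    submonoid H /\ has_rank H 2 /\ primary H /\ full_system H.
Proof.
exists 2, Hfull; split; first exact: Hfull_submonoid.
by split; [exact: Hfull_rank | split; [exact: Hfull_primary | exact: Hfull_full_system]].
Qed.
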